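(* For every split graph $G$, $\eta(G)\leq\chi(G)$, where $\chi(G)$ is the chromatic number of $G$.
   Context: All graphs are finite, simple and undirected. A graph is split if its vertex set can be partitioned into a clique and a stable set. For a vertex $v$, $N(v)$ is its set of neighbours. For a positive integer $k$, $[k]=\{1,\dots,k\}$. For a labeling $f:V(G)\to[k]$ and $S\subseteq V(G)$, $f(S)=\sum_{u\in S}f(u)$. A labeling $f:V(G)\to[k]$ is an additive $k$-coloring if $f(N(u))\neq f(N(v))$ for every edge $(u,v)$ of $G$. The additive chromatic number $\eta(G)$ is the least $k$ for which $G$ has an additive $k$-coloring. *)

From mathcomp Require Import all_boot.
Set Implicit Arguments. Unset Strict Implicit. Unset Printing Implicit Defensive.

Definition simple_graph (T : finType) (e : rel T) : Prop :=
  symmetric e /\ irreflexive e.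

Definition nbhd (T : finType) (e : rel T) (v : T) : {set T} := [set u | e v u].

Definition is_split (T : finType) (e : rel T) : Prop :=
  exists K S : {set T},
    [/\ K :&: S = set0, K :|: S = [set: T],
        {in K &, forall u v, u != v -> e u v} &
        {in S &, forall u v, ~~ e u v}].

Definition proper_coloring (T : finType) (e : rel T) (k : nat) (c : T -> 'I_k) : Prop :=
  forall u v, e u v -> c u != c v.

Definition colorable (T : finType) (e : rel T) (k : nat) : Prop :=
  exists c : T -> 'I_k, proper_coloring e c.

Lemma colorable_card (T : finType) (e : rel T) :
  irreflexive e -> exists k, colorable e k.
Proof.
move=> irr; exists #|T|; exists (@enum_rank T) => u v euv.
apply/negP => /eqP /enum_rank_inj huv; subst v; by rewrite irr in euv.
Qed.

Definition lsum (T : finType) (f : T -> nat) (S : {set T}) : nat := \sum_(u in S) f u.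

Definition additive_coloring (T : finType) (e : rel T) (k : nat) (f : T -> nat) : Prop :=
  (forall v, 1 <= f v <= k) /\
  (forall u v, e u v -> lsum f (nbhd e u) != lsum f (nbhd e v)).

Definition additive_colorable (T : finType) (e : rel T) (k : nat) : Prop :=
  exists f : T -> nat, additive_coloring e k f.

Definition is_chromatic_number (T : finType) (e : rel T) (k : nat) : Prop :=
  colorable e k /\ forall j, colorable e j -> k <= j.

(* eta(G) <= k: there exists an additive j-colouring for some j <= k
   (eta(G) is the least such j, so this says eta is defined and at most k). *)
Definition eta_le (T : finType) (e : rel T) (k : nat) : Prop :=
  exists2 j, j <= k & additive_colorable e j.

From mathcomp Require Import all_boot.
From mathcomp Require Import zify.

Set Implicit Arguments.
Unset Strict Implicit.
Unset Printing Implicit Defensive.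

(* Write V = K ∪ S with K a clique and S stable, and let k = χ(G) >= |K|.
   Label the clique vertices injectively by 1, ..., |K| and every stable
   vertex by k, and let F be the total label of K. For u in K the
   neighbourhood sum is F - f(u) + k a(u), where a(u) >= 0 counts the stable
   neighbours of u, so adjacent clique vertices have sums that differ modulo k.
   For s in S the sum is at most F, with equality only if s sees all of K; then
   K + s is a clique, |K| < k, and a clique neighbour u of s has sum at least
   F - |K| + k > F. Otherwise the sum of s is below F, while that of u is at
   least F - |K| + k >= F. *)

Lemma clique_card_le (T : finType) (e : rel T) (A : {set T}) (m : nat) :
  {in A &, forall u v, u != v -> e u v} -> colorable e m -> #|A| <= m.
Proof.
move=> Aclique [c c_proper].
rewrite -(card_in_imset (f := c)); last first.
  move=> u v uA vA /eqP; apply: contraTeq => uNv.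
  exact: c_proper (Aclique u v uA vA uNv).
by apply: leq_trans (max_card _) _; rewrite card_ord.
Qed.

Lemma eq_bounded_mod (x y k a b : nat) :
  0 < x <= k -> 0 < y <= k -> x + k * a = y + k * b -> x = y.
Proof.
move=> x_bnd y_bnd xy_eq; case: (ltngtP a b) => [ab|ba|ab_eq].
- by have := leq_mul2l k a.+1 b; rewrite ab orbT mulnS; lia.
- by have := leq_mul2l k b.+1 a; rewrite ba orbT mulnS; lia.
- by move: xy_eq; rewrite ab_eq; lia.
Qed.

Section SplitLabeling.

Variables (T : finType) (e : rel T) (K S : {set T}) (k : nat).

Hypothesis e_sym : symmetric e.
Hypothesis e_irr : irreflexive e.
Hypothesis KS_disjoint : K :&: S = set0.
Hypothesis KS_cover : K :|: S = [set: T].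
Hypothesis K_clique : {in K &, forall u v, u != v -> e u v}.
Hypothesis S_stable : {in S &, forall u v, ~~ e u v}.
Hypothesis k_colorable : colorable e k.

Definition split_label (v : T) : nat :=
  if v \in K then (index v (enum K)).+1 else k.

Let f := split_label.
Let F := \sum_(v in K) f v.

Lemma notin_clique_stable (v : T) : v \notin K -> v \in S.
Proof.
by move=> vNK; have := in_setT v; rewrite -KS_cover inE (negbTE vNK).
Qed.

Lemma stable_notin_clique (v : T) : v \in S -> v \notin K.
Proof.
move=> vS; apply/negP => vK.
have : v \in K :&: S by rewrite inE vK.
by rewrite KS_disjoint inE.
Qed.

Lemma split_label_clique_le (v : T) : v \in K -> 0 < f v <= #|K|.
Proof. by move=> vK; rewrite /f /split_label vK cardE index_mem mem_enum. Qed.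

Lemma clique_card_le_chi : #|K| <= k.
Proof. exact: clique_card_le K_clique k_colorable. Qed.

Lemma split_label_bounds (v : T) : 0 < f v <= k.
Proof.
have k_gt0 : 0 < k by case: k_colorable => c _; apply: leq_ltn_trans (ltn_ord (c v)).
case vK: (v \in K); last by rewrite /f /split_label vK k_gt0 leqnn.
by have := split_label_clique_le vK; have := clique_card_le_chi; lia.
Qed.

Lemma split_label_clique_inj : {in K &, injective f}.
Proof.
move=> u v uK vK; rewrite /f /split_label uK vK => -[] /(congr1 (nth u (enum K))).
by rewrite !nth_index ?mem_enum.
Qed.

Lemma nbhd_sum_clique (u : T) : u \in K ->
  lsum f (nbhd e u) + f u = F + k * #|nbhd e u :\: K|.
Proof.
move=> uK; rewrite /lsum (big_setID K) /= /F (big_setD1 u uK) /=.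
have -> : nbhd e u :&: K = K :\ u.
  apply/setP => v; rewrite !inE; case vK: (v \in K); rewrite ?andbF ?andbT //.
  by case: (eqVneq v u) => [->|vNu]; rewrite ?e_irr // (K_clique uK vK) // eq_sym.
rewrite [\sum_(v in nbhd e u :\: K) _](eq_bigr (fun=> k)).
  by rewrite sum_nat_const [_ * k]mulnC; lia.
by move=> v; rewrite inE /f /split_label => /andP[/negbTE->].
Qed.

Lemma nbhd_sum_stable (s : T) : s \in S ->
  lsum f (nbhd e s) + \sum_(v in K :\: nbhd e s) f v = F.
Proof.
move=> sS; rewrite /F [in RHS](big_setID (nbhd e s)) /=; congr (_ + _).
apply: eq_bigl => v; rewrite !inE; case esv: (e s v); rewrite ?andbT ?andbF //.
by apply/esym; apply: contraTT esv => /notin_clique_stable; apply: S_stable.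
Qed.

Lemma nbhd_sum_stable_lt (s : T) : s \in S -> ~~ (K \subset nbhd e s) ->
  lsum f (nbhd e s) < F.
Proof.
move=> sS /subsetPn[w wK]; rewrite inE => wN.
rewrite -(nbhd_sum_stable sS) (big_setD1 w) ?inE ?wK ?wN //=.
by have := split_label_clique_le wK; lia.
Qed.

Lemma stable_complete_clique_lt (s : T) : s \in S -> K \subset nbhd e s ->
  #|K| < k.
Proof.
move=> sS /subsetP KNs.
have sK_clique : {in s |: K &, forall u v, u != v -> e u v}.
  move=> u v; rewrite !inE => /orP[/eqP->|uK] /orP[/eqP->|vK]; rewrite ?eqxx // => uNv.
  - by have := KNs v vK; rewrite inE.
  - by rewrite e_sym; have := KNs u uK; rewrite inE.
  - exact: K_clique uNv.
by have := clique_card_le sK_clique k_colorable; rewrite cardsU1 stable_notin_clique.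
Qed.

Lemma nbhd_sum_clique_stable_lt (u s : T) : u \in K -> s \in S -> e u s ->
  lsum f (nbhd e s) < lsum f (nbhd e u).
Proof.
move=> uK sS eus.
have a_gt0 : 0 < #|nbhd e u :\: K|.
  by apply/card_gt0P; exists s; rewrite !inE eus stable_notin_clique.
have k_le : k <= k * #|nbhd e u :\: K| by rewrite leq_pmulr.
have := nbhd_sum_clique uK; have := split_label_clique_le uK.
have := nbhd_sum_stable sS.
case: (boolP (K \subset nbhd e s)) => [KNs|KNNs].
- by have := stable_complete_clique_lt sS KNs; lia.
- by have := nbhd_sum_stable_lt sS KNNs; have := clique_card_le_chi; lia.
Qed.

Lemma nbhd_sum_clique_neq (u v : T) : u \in K -> v \in K -> e u v ->
  lsum f (nbhd e u) != lsum f (nbhd e v).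
Proof.
move=> uK vK euv; apply/eqP => sum_eq.
suff /split_label_clique_inj uv : f u = f v by rewrite uv // e_irr in euv.
apply: (@eq_bounded_mod _ _ k #|nbhd e v :\: K| #|nbhd e u :\: K|);
  rewrite ?split_label_bounds //.
by have := nbhd_sum_clique uK; have := nbhd_sum_clique vK; lia.
Qed.

Lemma split_label_additive : additive_coloring e k f.
Proof.
split=> [|u v euv]; first exact: split_label_bounds.
case: (boolP (u \in K)) => [uK|/notin_clique_stable uS];
  case: (boolP (v \in K)) => [vK|/notin_clique_stable vS].
- exact: nbhd_sum_clique_neq.
- by rewrite neq_ltn (nbhd_sum_clique_stable_lt uK vS euv) orbT.
- by rewrite neq_ltn (nbhd_sum_clique_stable_lt vK uS) // e_sym.
- by have := S_stable uS vS; rewrite euv.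
Qed.

End SplitLabeling.

Theorem mainTheorem10 (T : finType) (e : rel T) (k : nat) :
  simple_graph e -> is_split e -> is_chromatic_number e k -> eta_le e k.
Proof.
move=> [e_sym e_irr] [K [S [KS_disjoint KS_cover K_clique S_stable]]] [k_colorable _].
exists k => //; exists (split_label K k).
exact: split_label_additive e_sym e_irr KS_disjoint KS_cover K_clique S_stable k_colorable.
Qed.
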